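(* Let $\tilde f:[-\pi,\pi]\times[-1,1]\to\mathbb{C}$ be a BMC function (defined below). Fix $(\theta^*,\rho^* )\in[0,\pi]\times[0,1]$ and let $$M=\begin{bmatrix}\tilde f(\theta^*-\pi,\rho^* ) & \tilde f(\theta^*,\rho^* )\\ \tilde f(\theta^*-\pi,-\rho^* ) & \tilde f(\theta^*,-\rho^* )\end{bmatrix},$$ and assume $M$ is invertible. Define $\tilde s:[-\pi,\pi]\times[-1,1]\to\mathbb{C}$ by $$\tilde s(\theta,\rho)=\begin{bmatrix}\tilde f(\theta^*-\pi,\rho) & \tilde f(\theta^*,\rho)\end{bmatrix} M^{-1}\begin{bmatrix}\tilde f(\theta,\rho^* )\\ \tilde f(\theta,-\rho^* )\end{bmatrix}.$$ Then $\tilde s$ is also a BMC function. Consequently, the update $\tilde f\leftarrow \tilde f-\tilde s$ (a structure-preserving Gaussian elimination step with $2\times 2$ pivot $M$) maps BMC functions to BMC functions.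
   Context: A function $\tilde f:[-\pi,\pi]\times[-1,1]\to\mathbb{C}$ is called a BMC (block-mirror centrosymmetric) function if there are functions $g,h:[0,\pi]\times[0,1]\to\mathbb{C}$ such that $\tilde f(\theta,\rho)=g(\theta+\pi,\rho)$ for $(\theta,\rho)\in[-\pi,0]\times[0,1]$; $\tilde f(\theta,\rho)=h(\theta,\rho)$ for $(\theta,\rho)\in[0,\pi]\times[0,1]$; $\tilde f(\theta,\rho)=g(\theta,-\rho)$ for $(\theta,\rho)\in[0,\pi]\times[-1,0]$; $\tilde f(\theta,\rho)=h(\theta+\pi,-\rho)$ for $(\theta,\rho)\in[-\pi,0]\times[-1,0]$. Equivalently, $\tilde f(\theta,\rho)=\tilde f(\theta+\pi,-\rho)$ for all $(\theta,\rho)\in[-\pi,0]\times[-1,1]$. *)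

From HB Require Import structures.
From mathcomp Require Import all_boot all_order all_algebra.
From mathcomp Require Import complex.
From mathcomp Require Import reals trigo.
Set Implicit Arguments. Unset Strict Implicit. Unset Printing Implicit Defensive.
Import Order.TTheory GRing.Theory Num.Theory.
Local Open Scope ring_scope.
Local Open Scope complex_scope.

(* A function [-pi,pi] x [-1,1] -> C is modelled as f : R -> R -> R[i];
   its values outside the rectangle are irrelevant (BMC only constrains
   values inside the rectangle). *)
Definition BMC (R : realType) (f : R -> R -> R[i]) : Prop :=
  exists g h : R -> R -> R[i],
    [/\ (forall th rho, -pi <= th <= 0 -> 0 <= rho <= 1 -> f th rho = g (th + pi) rho),
        (forall th rho, 0 <= th <= pi -> 0 <= rho <= 1 -> f th rho = h th rho),
        (forall th rho, 0 <= th <= pi -> -1 <= rho <= 0 -> f th rho = g th (- rho)) &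
        (forall th rho, -pi <= th <= 0 -> -1 <= rho <= 0 -> f th rho = h (th + pi) (- rho))].

Definition pivotM (R : realType) (f : R -> R -> R[i]) (ths rhos : R) : 'M[R[i]]_2 :=
  \matrix_(i < 2, j < 2)
     f (if j == ord0 then ths - pi else ths) (if i == ord0 then rhos else - rhos).

Definition schur_update (R : realType) (f : R -> R -> R[i]) (ths rhos : R)
    (th rho : R) : R[i] :=
  ((\row_(j < 2) f (if j == ord0 then ths - pi else ths) rho)
     *m invmx (pivotM f ths rhos)
     *m (\col_(i < 2) f th (if i == ord0 then rhos else - rhos))) ord0 ord0.

(* BMC is the symmetry f(th, rho) = f(th + pi, -rho).  Under th -> th + pi
   the column [f(th, rhos); f(th, -rhos)] of the update has its two entries
   exchanged, and so does the row [f(ths - pi, rho), f(ths, rho)] under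
   rho -> -rho; both are multiplications by the transposition matrix P.  The
   pivot itself satisfies P M P = M, hence P M^-1 P = M^-1 and the two P's
   cancel in s.  Since BMC is a linear condition, f - s is BMC as well. *)

From mathcomp Require Import all_boot all_order all_algebra perm.
From mathcomp Require Import complex.
From mathcomp Require Import reals trigo.
From mathcomp Require Import lra.
Import Order.TTheory GRing.Theory Num.Theory.
Set Implicit Arguments. Unset Strict Implicit. Unset Printing Implicit Defensive.
Local Open Scope ring_scope.

Lemma tperm01E (j : 'I_2) : tperm 0 1 j = if j == 0 then 1 else 0.
Proof.
by case: tpermP => [->|->|]; case: j => [[|[|//]] ?] //= ne0 ne1;
  [case: ne0 | case: ne1]; apply: val_inj.
Qed.

Lemma mul_tperm_mxK (R : pzSemiRingType) n (i j : 'I_n) :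
  tperm_mx i j *m tperm_mx i j = 1%:M :> 'M[R]_n.
Proof. by rewrite -perm_mxM tperm2 perm_mx1. Qed.

Lemma invmx_conj_involution (R : comUnitRingType) n (P A : 'M[R]_n) :
  P *m P = 1%:M -> P *m A *m P = A -> P *m invmx A *m P = invmx A.
Proof.
move=> PP PAP; have [Au | /invmx_out -> //] := boolP (A \in unitmx).
have left_inv : P *m invmx A *m P *m A = 1%:M.
  by rewrite -{2}PAP !mulmxA -(mulmxA _ P P) PP mulmx1 -(mulmxA _ _ A)
             (mulVmx Au) mulmx1 PP.
by rewrite -[LHS](mulmxK Au) left_inv mul1mx.
Qed.

Definition mirror_invariant (R : realType) (f : R -> R -> R[i]) : Prop :=
  forall th rho, -pi <= th <= 0 -> -1 <= rho <= 1 ->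
    f th rho = f (th + pi) (- rho).

Lemma BMCP (R : realType) (f : R -> R -> R[i]) : BMC f <-> mirror_invariant f.
Proof.
split.
- move=> [g [h [fW fE fSE fSW]]] th rho th_range /andP[rho_ge rho_le].
  have th'_range : 0 <= th + pi <= pi.
    by case/andP: th_range => *; apply/andP; split; lra.
  have [rho_ge0 | rho_lt0] := lerP 0 rho.
  + rewrite fW ?rho_ge0 // fSE ?opprK //; apply/andP; split; lra.
  + rewrite fSW ?rho_ge ?(ltW rho_lt0) // fE //; apply/andP; split; lra.
- move=> f_mirror; exists (fun th rho => f th (- rho)), f.
  split=> th rho th_range rho_range /=; rewrite ?opprK //.
  all: by rewrite f_mirror //; case/andP: rho_range => *; apply/andP; split; lra.
Qed.

Lemma mirror_invariantB (R : realType) (f g : R -> R -> R[i]) :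
  mirror_invariant f -> mirror_invariant g ->
  mirror_invariant (fun th rho => f th rho - g th rho).
Proof. by move=> fP gP th rho th_range rho_range; rewrite fP // gP. Qed.

Section SchurUpdateMirror.

Variables (R : realType) (f : R -> R -> R[i]) (ths rhos : R).
Hypotheses (f_mirror : mirror_invariant f)
  (ths_range : 0 <= ths <= pi) (rhos_range : -1 <= rhos <= 1).

Local Notation swap := (tperm_mx 0 1 : 'M[R[i]]_2).
Local Notation pivot_row rho :=
  (\row_(j < 2) f (if j == ord0 then ths - pi else ths) rho).
Local Notation pivot_col th :=
  (\col_(i < 2) f th (if i == ord0 then rhos else - rhos)).

Let ths'_range : -pi <= ths - pi <= 0.
Proof. by case/andP: ths_range => *; apply/andP; split; lra. Qed.

Let opp_range (x : R) : -1 <= x <= 1 -> -1 <= - x <= 1.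
Proof. by case/andP=> *; apply/andP; split; lra. Qed.

Let f_mirror_pivot (rho : R) : -1 <= rho <= 1 -> f (ths - pi) rho = f ths (- rho).
Proof. by move=> rho_range; rewrite (f_mirror ths'_range rho_range) subrK. Qed.

Lemma pivot_row_mirror (rho : R) : -1 <= rho <= 1 ->
  pivot_row (- rho) = pivot_row rho *m swap.
Proof.
move=> rho_range; rewrite -xcolE; apply/rowP => j; rewrite !mxE tperm01E.
case: j => [[|[|//]] ?] /=.
- by rewrite (f_mirror_pivot (opp_range rho_range)) opprK.
- by rewrite (f_mirror_pivot rho_range).
Qed.

Lemma pivot_col_mirror (th : R) : -pi <= th <= 0 ->
  pivot_col (th + pi) = swap *m pivot_col th.
Proof.
move=> th_range; rewrite -xrowE; apply/colP => i; rewrite !mxE tperm01E.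
case: i => [[|[|//]] ?] /=.
- by rewrite (f_mirror th_range (opp_range rhos_range)) opprK.
- by rewrite (f_mirror th_range rhos_range).
Qed.

Lemma pivotM_mirror : swap *m pivotM f ths rhos *m swap = pivotM f ths rhos.
Proof.
apply/matrixP => i j; rewrite -xrowE -xcolE !mxE !tperm01E.
case: i => [[|[|//]] ?]; case: j => [[|[|//]] ?] /=.
all: by rewrite ?(f_mirror_pivot rhos_range)
                ?(f_mirror_pivot (opp_range rhos_range)) ?opprK.
Qed.

Lemma schur_update_mirror : mirror_invariant (schur_update f ths rhos).
Proof.
move=> th rho th_range rho_range; rewrite /schur_update.
rewrite pivot_row_mirror // pivot_col_mirror //.
by rewrite -{1}(invmx_conj_involution (mul_tperm_mxK _ 0 1) pivotM_mirror) !mulmxA.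
Qed.

End SchurUpdateMirror.

Theorem lemma3p1 (R : realType) (f : R -> R -> R[i]) (ths rhos : R) :
  BMC f ->
  0 <= ths <= pi -> 0 <= rhos <= 1 ->
  pivotM f ths rhos \in unitmx ->
  BMC (schur_update f ths rhos) /\
  BMC (fun th rho => f th rho - schur_update f ths rhos th rho).
Proof.
move=> /BMCP f_mirror ths_range /andP[rhos_ge0 rhos_le1] _.
have rhos_range : -1 <= rhos <= 1 by apply/andP; split; lra.
have s_mirror := schur_update_mirror f_mirror ths_range rhos_range.
by split; apply/BMCP => //; apply: mirror_invariantB.
Qed.
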